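(* On the line ${\rm O}x$, let ${\rm A},{\rm B}$ have abscissas $0<x_{\rm B}<x_{\rm A}$ and let $v_E=\sqrt{2/x_{\rm A}}$. For each initial velocity $v_{\rm A}\in\,]-\infty,v_E[$, the rectilinear solution of $\ddot x=-1/x^2$ with $x(t_{\rm A})=x_{\rm A}$, $\dot x(t_{\rm A})=v_{\rm A}$ reaches ${\rm B}$ before any collision with ${\rm O}$ (after culminating if $v_{\rm A}\ge0$); let $T_D^R(v_{\rm A})>0$ be the first time after $t_{\rm A}$, minus $t_{\rm A}$, at which it is at ${\rm B}$. The direct Keplerian arcs from ${\rm A}$ to ${\rm B}$ are exactly these arcs, parametrized by $v_{\rm A}\in\,]-\infty,v_E[$. The function $T_D^R$ is increasing with ${\rm d}T_D^R/{\rm d}v_{\rm A}>0$ everywhere, $T_D^R(v_{\rm A})\to0$ as $v_{\rm A}\to-\infty$ and $T_D^R(v_{\rm A})\to+\infty$ as $v_{\rm A}\to v_E^-$.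
   Context: Units are normalized so that the Kepler problem with fixed center ${\rm O}$ (origin) is $\ddot q=-q/|q|^3$; on a line through ${\rm O}$ with $x>0$ it reads $\ddot x=-1/x^2$. A Keplerian arc from ${\rm A}$ to ${\rm B}$ is a solution on a compact time interval $[t_{\rm A},t_{\rm B}]$ with $q(t_{\rm A})={\rm A}$, $q(t_{\rm B})={\rm B}$; its elapsed time is $t_{\rm B}-t_{\rm A}$. Rectilinear motions are extended after collision with ${\rm O}$ (the body bounces back along the same ray, keeping the same energy). An arc is indirect if its convex hull contains ${\rm O}$ and direct otherwise; for rectilinear arcs, direct means no collision with ${\rm O}$ occurs. *)

From Stdlib Require Import Reals.
Open Scope R_scope.

Definition norm2 (a b : R) : R := sqrt (a ^ 2 + b ^ 2).

(* Derivatives are two-sided (the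
   solution is given as functions on R satisfying the ODE at every
   point of [a,b]). *)
Definition kepler_sol (q1 q2 p1 p2 : R -> R) (a b : R) : Prop :=
  a <= b /\
  forall t, a <= t <= b ->
    norm2 (q1 t) (q2 t) <> 0 /\
    derivable_pt_lim q1 t (p1 t) /\
    derivable_pt_lim q2 t (p2 t) /\
    derivable_pt_lim p1 t (- q1 t / (norm2 (q1 t) (q2 t)) ^ 3) /\
    derivable_pt_lim p2 t (- q2 t / (norm2 (q1 t) (q2 t)) ^ 3).

(* (y1,y2) lies in the convex hull of the planar set S
   (finite convex combinations; sum_f_R0 f n = f 0 + ... + f n). *)
Definition in_conv_hull (S : R -> R -> Prop) (y1 y2 : R) : Prop :=
  exists (n : nat) (c1 c2 w : nat -> R),
    (forall i, (i <= n)%nat -> S (c1 i) (c2 i) /\ 0 <= w i) /\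
    sum_f_R0 w n = 1 /\
    sum_f_R0 (fun i => w i * c1 i) n = y1 /\
    sum_f_R0 (fun i => w i * c2 i) n = y2.

Definition arc_image (q1 q2 : R -> R) (a b : R) : R -> R -> Prop :=
  fun z1 z2 => exists t, a <= t <= b /\ q1 t = z1 /\ q2 t = z2.

(* A direct Keplerian arc from A=(a1,a2) to B=(b1,b2) on [tA,tB]:
   a solution (without collision) whose convex hull does not contain O.
   (Arcs with a collision are rectilinear arcs through O, hence indirect,
   so they need not be considered here.) *)
Definition direct_arc (q1 q2 p1 p2 : R -> R) (tA tB a1 a2 b1 b2 : R) : Prop :=
  kepler_sol q1 q2 p1 p2 tA tB /\
  q1 tA = a1 /\ q2 tA = a2 /\ q1 tB = b1 /\ q2 tB = b2 /\
  ~ in_conv_hull (arc_image q1 q2 tA tB) 0 0.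

Definition vE (xA : R) : R := sqrt (2 / xA).

From Stdlib Require Import Reals Lra Psatz Lia.
From Stdlib Require Import IndefiniteDescription Classical Ranalysis5.
From Coquelicot Require Import Coquelicot.
Open Scope R_scope.

(* A direct arc from A to B has zero angular momentum: otherwise it leaves
   the axis Ox and, its angular momentum keeping a constant sign, meets the
   axis again on the far side of O, which then lies in its convex hull.  So
   the direct arcs are the rectilinear solutions falling from A to B before
   any collision.  Their duration is read off first integrals: for vA < 0 it
   is the integral of dx / |v| along the fall, and for 0 <= vA < vE it comes
   from Kepler's equation on the degenerate ellipse of semi-major axis
   a = 1 / (2/xA - vA^2).  Both expressions have a positive derivative in vA
   and agree where both apply; the first is at most (xA - xB) / |vA| and the
   second is at least a xA vA, which gives the two limits. *)

(* Stdlib's derivative rules are stated on [plus_fct] etc.; these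
   variants on explicit lambdas are what [apply] can unify with. *)
Lemma dlim_eq f t l l' : derivable_pt_lim f t l -> l = l' -> derivable_pt_lim f t l'.
Proof. now intros H <-. Qed.

Lemma dlim_const c t : derivable_pt_lim (fun _ => c) t 0.
Proof. apply derivable_pt_lim_const. Qed.

Lemma dlim_id t : derivable_pt_lim (fun s => s) t 1.
Proof. apply derivable_pt_lim_id. Qed.

Lemma dlim_plus f g t l1 l2 : derivable_pt_lim f t l1 -> derivable_pt_lim g t l2 ->
  derivable_pt_lim (fun s => f s + g s) t (l1 + l2).
Proof. apply derivable_pt_lim_plus. Qed.

Lemma dlim_minus f g t l1 l2 : derivable_pt_lim f t l1 -> derivable_pt_lim g t l2 ->
  derivable_pt_lim (fun s => f s - g s) t (l1 - l2).
Proof. apply derivable_pt_lim_minus. Qed.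

Lemma dlim_opp f t l : derivable_pt_lim f t l -> derivable_pt_lim (fun s => - f s) t (- l).
Proof. apply derivable_pt_lim_opp. Qed.

Lemma dlim_mult f g t l1 l2 : derivable_pt_lim f t l1 -> derivable_pt_lim g t l2 ->
  derivable_pt_lim (fun s => f s * g s) t (l1 * g t + f t * l2).
Proof. apply derivable_pt_lim_mult. Qed.

Lemma dlim_scal c f t l : derivable_pt_lim f t l ->
  derivable_pt_lim (fun s => c * f s) t (c * l).
Proof. apply derivable_pt_lim_scal. Qed.

Lemma dlim_comp f g t l1 l2 : derivable_pt_lim f t l1 ->
  derivable_pt_lim g (f t) l2 -> derivable_pt_lim (fun s => g (f s)) t (l2 * l1).
Proof. apply derivable_pt_lim_comp. Qed.

Lemma dlim_inv f t l : derivable_pt_lim f t l -> f t <> 0 ->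
  derivable_pt_lim (fun s => / f s) t (- l / (f t * f t)).
Proof.
  intros H Hf. apply is_derive_Reals. apply is_derive_Reals in H.
  replace (- l / (f t * f t)) with (- l / f t ^ 2) by (simpl; field; auto).
  now apply is_derive_inv.
Qed.

Lemma dlim_sqrt f t l : derivable_pt_lim f t l -> 0 < f t ->
  derivable_pt_lim (fun s => sqrt (f s)) t (l / (2 * sqrt (f t))).
Proof.
  intros H Hf. apply (dlim_eq _ _ (/ (2 * sqrt (f t)) * l)).
  - apply dlim_comp; [exact H | now apply derivable_pt_lim_sqrt].
  - pose proof (sqrt_lt_R0 _ Hf). field. lra.
Qed.

Lemma dlim_continuity_pt f t l : derivable_pt_lim f t l -> continuity_pt f t.
Proof. intro H. apply derivable_continuous_pt. now exists l. Qed.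

Lemma dlim_locally_ext f g x l d : 0 < d -> (forall y, Rabs (y - x) < d -> f y = g y) ->
  derivable_pt_lim f x l -> derivable_pt_lim g x l.
Proof.
  intros Hd Hfg H eps Heps. destruct (H eps Heps) as [d0 Hd0].
  assert (Hm : 0 < Rmin d0 d) by (apply Rmin_pos; [apply cond_pos | lra]).
  exists (mkposreal _ Hm). intros h Hh0 Hh. simpl in Hh.
  rewrite <- (Hfg (x + h)), <- (Hfg x).
  - apply Hd0; auto. eapply Rlt_le_trans; [exact Hh | apply Rmin_l].
  - rewrite Rminus_diag, Rabs_R0; lra.
  - replace (x + h - x) with h by ring. eapply Rlt_le_trans; [exact Hh | apply Rmin_r].
Qed.

Lemma const_of_dlim_0 (f : R -> R) a b : a <= b ->
  (forall t, a <= t <= b -> derivable_pt_lim f t 0) -> f b = f a.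
Proof.
  intros Hab Hd. destruct (Rle_lt_or_eq_dec a b Hab) as [Hlt | <-]; [|reflexivity].
  destruct (MVT_cor2 f (fun _ => 0) a b Hlt Hd) as [c [Hc _]]. lra.
Qed.

Lemma incr_of_dlim_pos (f : R -> R) a b :
  (forall t, a <= t <= b -> exists d, derivable_pt_lim f t d /\ 0 < d) ->
  forall s t, a <= s -> s < t -> t <= b -> f s < f t.
Proof.
  intros Hd s t Hs Hst Ht.
  assert (HD : forall c, s <= c <= t -> derivable_pt_lim f c (Derive f c) /\ 0 < Derive f c).
  { intros c Hc. destruct (Hd c ltac:(lra)) as [d [Hfd Hd0]].
    replace (Derive f c) with d; [auto|].
    symmetry. apply is_derive_unique, is_derive_Reals, Hfd. }
  destruct (MVT_cor2 f (Derive f) s t Hst (fun c Hc => proj1 (HD c Hc))) as [c [Hc Hc']].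
  pose proof (proj2 (HD c ltac:(lra))). nra.
Qed.

Lemma decr_of_dlim_neg (f : R -> R) a b :
  (forall t, a <= t <= b -> exists d, derivable_pt_lim f t d /\ d < 0) ->
  forall s t, a <= s -> s < t -> t <= b -> f t < f s.
Proof.
  intros Hd s t Hs Hst Ht.
  enough (- f s < - f t) by lra.
  apply (incr_of_dlim_pos (fun s => - f s) a b); auto.
  intros c Hc. destruct (Hd c Hc) as [d [Hfd Hd0]].
  exists (- d). split; [now apply dlim_opp | lra].
Qed.

Lemma inverse_dlim (f f' g : R -> R) lb ub y : lb < ub ->
  (forall s, lb <= s <= ub -> derivable_pt_lim f s (f' s) /\ 0 < f' s) ->
  (forall s, lb <= s <= ub -> g (f s) = s) ->
  (forall y, f lb <= y <= f ub -> lb <= g y <= ub /\ f (g y) = y) ->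
  f lb < y < f ub -> derivable_pt_lim g y (/ f' (g y)).
Proof.
  intros Hlu Hd Hgf Hg Hy.
  assert (Hincr : forall x y, lb <= x -> x < y -> y <= ub -> f x < f y).
  { apply incr_of_dlim_pos. intros s Hs. exists (f' s). now apply Hd. }
  assert (Hcont : forall a, lb <= a <= ub -> continuity_pt f a).
  { intros a Ha. exact (dlim_continuity_pt _ _ _ (proj1 (Hd a Ha))). }
  assert (Hglb : g (f lb) = lb) by (apply Hgf; lra).
  assert (Hgub : g (f ub) = ub) by (apply Hgf; lra).
  assert (Prf : forall a, g (f lb) <= a <= g (f ub) -> derivable_pt f a).
  { intros a Ha. rewrite Hglb, Hgub in Ha. exists (f' a). now apply Hd. }
  assert (Hgc : continuity_pt g y).
  { apply (continuity_pt_recip_interv f g lb ub Hlu Hincr); [| |exact Hcont|exact Hy].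
    - intros x H1 H2. unfold comp, id. apply Hg; lra.
    - intros x H1 H2. apply Hg; lra. }
  assert (Hgy : g (f lb) <= g y <= g (f ub)) by (rewrite Hglb, Hgub; apply Hg; lra).
  destruct (Hd (g y) ltac:(apply Hg; lra)) as [Hfg Hpos].
  assert (Hval : derive_pt f (g y) (Prf (g y) Hgy) = f' (g y))
    by now apply derive_pt_eq_0.
  pose proof (derivable_pt_lim_recip_interv f g (f lb) (f ub) y Prf Hgc
    ltac:(lra) Hy Hgy) as Hinv.
  rewrite Hval in Hinv. apply (dlim_eq _ _ (1 / f' (g y))); [|field; lra].
  apply Hinv.
  - intros x Hx. unfold comp, id. apply Hg; lra.
  - lra.
Qed.

Lemma increasing_inverse (f f' : R -> R) lb ub : lb < ub ->
  (forall s, lb <= s <= ub -> derivable_pt_lim f s (f' s) /\ 0 < f' s) ->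
  exists g,
    (forall s, lb <= s <= ub -> g (f s) = s) /\
    (forall y, f lb <= y <= f ub -> lb <= g y <= ub /\ f (g y) = y) /\
    (forall y, f lb < y < f ub -> derivable_pt_lim g y (/ f' (g y))).
Proof.
  intros Hlu Hd.
  assert (Hincr : forall x y, lb <= x -> x < y -> y <= ub -> f x < f y).
  { apply incr_of_dlim_pos. intros s Hs. exists (f' s). now apply Hd. }
  assert (Hle : forall x y, lb <= x -> x <= y -> y <= ub -> f x <= f y).
  { intros x y Hx Hxy Hy. destruct (Rle_lt_or_eq_dec _ _ Hxy) as [H | <-]; [|lra].
    left. now apply Hincr. }
  assert (Hinj : forall x y, lb <= x <= ub -> lb <= y <= ub -> f x = f y -> x = y).
  { intros x y Hx Hy Hxy. destruct (Rtotal_order x y) as [H | [H | H]]; auto.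
    - pose proof (Hincr x y ltac:(lra) H ltac:(lra)). lra.
    - pose proof (Hincr y x ltac:(lra) H ltac:(lra)). lra. }
  assert (Hex : forall y, exists x, f lb <= y <= f ub -> lb <= x <= ub /\ f x = y).
  { intro y. destruct (classic (f lb <= y <= f ub)) as [Hy | Hy]; [|exists lb; tauto].
    assert (Hcont : forall a, lb <= a <= ub -> continuity_pt f a).
    { intros a Ha. exact (dlim_continuity_pt _ _ _ (proj1 (Hd a Ha))). }
    destruct (f_interv_is_interv f lb ub y Hlu Hy Hcont) as [x Hx]. now exists x. }
  set (g := fun y => proj1_sig (constructive_indefinite_description _ (Hex y))).
  assert (Hg : forall y, f lb <= y <= f ub -> lb <= g y <= ub /\ f (g y) = y).
  { intro y. unfold g. now destruct (constructive_indefinite_description _ (Hex y)). }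
  assert (Hgf : forall s, lb <= s <= ub -> g (f s) = s).
  { intros s Hs. destruct (Hg (f s)) as [H1 H2]; [split; apply Hle; lra|].
    now apply Hinj. }
  exists g. split; [exact Hgf | split; [exact Hg|]].
  intros y Hy. now apply (inverse_dlim f f' g lb ub).
Qed.

Definition radial_solution (x v : R -> R) (t0 t1 : R) : Prop :=
  forall t, t0 <= t <= t1 -> 0 < x t /\ derivable_pt_lim x t (v t) /\
     derivable_pt_lim v t (- / (x t * x t)).

Lemma radial_solution_sub x v a b c d :
  radial_solution x v a b -> a <= c -> d <= b -> radial_solution x v c d.
Proof. intros H Hac Hdb t Ht. apply H. lra. Qed.

Lemma radial_energy x v a b : radial_solution x v a b -> forall t, a <= t <= b ->
  v t * v t - 2 / x t = v a * v a - 2 / x a.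
Proof.
  intros H t Ht.
  apply (const_of_dlim_0 (fun t => v t * v t - 2 / x t) a t); [lra|].
  intros s Hs. destruct (H s ltac:(lra)) as [Hx [Hdx Hdv]].
  unfold Rdiv. eapply dlim_eq.
  - apply dlim_minus; [apply dlim_mult; eauto|].
    apply (dlim_scal 2 (fun s => / x s)). apply dlim_inv; eauto. lra.
  - field. lra.
Qed.

Lemma radial_velocity_decr x v a b : radial_solution x v a b ->
  forall s t, a <= s -> s < t -> t <= b -> v t < v s.
Proof.
  intro H. apply decr_of_dlim_neg. intros t Ht.
  destruct (H t Ht) as [Hx [_ Hdv]]. exists (- / (x t * x t)). split; [exact Hdv|].
  enough (0 < / (x t * x t)) by lra. apply Rinv_0_lt_compat. nra.
Qed.

Lemma radial_velocity_zero x v a b : radial_solution x v a b -> a <= b ->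
  0 <= v a -> v b < 0 -> exists z, a <= z <= b /\ v z = 0.
Proof.
  intros H Hab Ha Hb. destruct (Rle_lt_or_eq_dec 0 (v a) Ha) as [Ha' | Ha'].
  - destruct (IVT_interv (fun t => - v t) a b) as [z [Hz Hz']]; try lra.
    + intros c Hc. apply continuity_pt_opp.
      exact (dlim_continuity_pt _ _ _ (proj2 (proj2 (H c Hc)))).
    + destruct (Rle_lt_or_eq_dec _ _ Hab) as [| ->]; lra.
    + exists z. split; [exact Hz | lra].
  - exists a. split; lra.
Qed.

Lemma radial_speed_below_escape x v a b z : radial_solution x v a b -> a <= z <= b ->
  v z = 0 -> v a * v a < 2 / x a.
Proof.
  intros H Hz Hvz. pose proof (radial_energy x v a b H z Hz) as He.
  destruct (H z Hz) as [Hxz _].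
  assert (0 < 2 / x z) by (apply Rdiv_lt_0_compat; lra).
  rewrite Hvz in He. lra.
Qed.

Lemma vE_pos xA : 0 < xA -> 0 < vE xA.
Proof. intro. apply sqrt_lt_R0, Rdiv_lt_0_compat; lra. Qed.

Lemma vE_sq xA : 0 < xA -> vE xA * vE xA = 2 / xA.
Proof. intro. apply sqrt_sqrt. left. apply Rdiv_lt_0_compat; lra. Qed.

Lemma lt_vE_sq xA u : 0 < xA -> - vE xA < u < vE xA -> u * u < 2 / xA.
Proof. intros. rewrite <- vE_sq by auto. nra. Qed.

Lemma sq_lt_vE xA u : 0 < xA -> u * u < 2 / xA -> - vE xA < u < vE xA.
Proof. intros. rewrite <- vE_sq in *|- by auto. pose proof (vE_pos xA). nra. Qed.

Section RadialArc.
Variables (x v : R -> R) (tA tB xA xB : R).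
Hypotheses (HB : 0 < xB) (HBA : xB < xA) (Hs : radial_solution x v tA tB)
  (Hab : tA <= tB) (HxA : x tA = xA) (HxB : x tB = xB).

Lemma radial_arc_time_pos : tA < tB.
Proof. destruct (Rle_lt_or_eq_dec _ _ Hab) as [| <-]; lra. Qed.

Lemma radial_arc_final_velocity_neg : v tB < 0.
Proof.
  pose proof radial_arc_time_pos as Hlt.
  destruct (MVT_cor2 x v tA tB Hlt (fun c Hc => proj1 (proj2 (Hs c Hc)))) as [c [Hc Hc']].
  assert (v c < 0) by (rewrite HxA, HxB in Hc; nra).
  pose proof (radial_velocity_decr x v tA tB Hs c tB). lra.
Qed.

Lemma radial_arc_below_escape : v tA < vE xA.
Proof.
  pose proof (vE_pos xA ltac:(lra)).
  destruct (Rlt_le_dec (v tA) 0) as [| Hv]; [lra|].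
  destruct (radial_velocity_zero x v tA tB Hs Hab Hv radial_arc_final_velocity_neg)
    as [z [Hz Hvz]].
  apply sq_lt_vE; [lra|]. rewrite <- HxA. exact (radial_speed_below_escape x v tA tB z Hs Hz Hvz).
Qed.

Lemma radial_arc_culminates : 0 <= v tA -> exists tc, tA <= tc <= tB /\ v tc = 0.
Proof.
  intro Hv. exact (radial_velocity_zero x v tA tB Hs Hab Hv radial_arc_final_velocity_neg).
Qed.

End RadialArc.

Lemma increasing_preimage_between (f : R -> R) lb ub s t x :
  (forall x y, lb <= x -> x < y -> y <= ub -> f x < f y) ->
  lb <= x <= ub -> lb <= s <= t -> t <= ub -> f s <= f x <= f t -> s <= x <= t.
Proof.
  intros Hincr Hx Hs Ht Hf. split.
  - destruct (Rle_lt_dec s x) as [|Hlt]; [assumption|]. pose proof (Hincr x s); lra.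
  - destruct (Rle_lt_dec x t) as [|Hlt]; [assumption|]. pose proof (Hincr t x); lra.
Qed.

(* A curve [s |-> (X s, V s)] run at speed [ds/dt = 1 / tau' s] solves
   [x'' = -1/x^2] exactly when [X' = V tau'] and [V' = - tau' / X^2];
   inverting the clock [tau] turns it into a radial solution. *)
Lemma radial_solution_of_param (tau tau' X V : R -> R) lb ub E0 E1 tA :
  lb < E0 -> E0 < E1 -> E1 < ub ->
  (forall s, lb <= s <= ub -> derivable_pt_lim tau s (tau' s) /\ 0 < tau' s) ->
  (forall s, E0 <= s <= E1 ->
     0 < X s /\ derivable_pt_lim X s (V s * tau' s) /\
     derivable_pt_lim V s (- tau' s / (X s * X s))) ->
  0 < tau E1 - tau E0 /\
  exists x v, radial_solution x v tA (tA + (tau E1 - tau E0)) /\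
    x tA = X E0 /\ v tA = V E0 /\ x (tA + (tau E1 - tau E0)) = X E1.
Proof.
  intros H0 H01 H1 Htau HXV.
  assert (Hincr : forall s t, lb <= s -> s < t -> t <= ub -> tau s < tau t).
  { apply incr_of_dlim_pos. intros s Hs. exists (tau' s). now apply Htau. }
  destruct (increasing_inverse tau tau' lb ub ltac:(lra) Htau) as [g [Hgf [Hg Hgd]]].
  split; [pose proof (Hincr E0 E1); lra|].
  assert (Hrange : forall y, tau E0 <= y <= tau E1 -> E0 <= g y <= E1).
  { intros y Hy. pose proof (Hincr lb E0); pose proof (Hincr E1 ub).
    destruct (Hg y ltac:(lra)) as [Hgy Hfgy].
    now apply (increasing_preimage_between tau lb ub); try lra. }
  set (c := tau E0 - tA).
  exists (fun t => X (g (t + c))), (fun t => V (g (t + c))).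
  split; [|split; [|split]].
  - intros t Ht.
    assert (Hy : tau E0 <= t + c <= tau E1) by (unfold c; lra).
    specialize (Hrange _ Hy).
    destruct (HXV (g (t + c)) Hrange) as [HX [HdX HdV]].
    destruct (Htau (g (t + c)) ltac:(lra)) as [_ Htp].
    assert (Hdg : derivable_pt_lim (fun t => g (t + c)) t (/ tau' (g (t + c)))).
    { eapply dlim_eq.
      - apply (dlim_comp (fun t => t + c) g).
        + apply (dlim_plus (fun t => t) (fun _ => c)); [apply dlim_id | apply dlim_const].
        + apply Hgd. pose proof (Hincr lb E0); pose proof (Hincr E1 ub); lra.
      - ring. }
    split; [exact HX | split].
    + eapply dlim_eq; [apply (dlim_comp (fun t => g (t + c)) X); eauto|].
      field. lra.
    + eapply dlim_eq; [apply (dlim_comp (fun t => g (t + c)) V); eauto|].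
      field. lra.
  - unfold c. replace (tA + (tau E0 - tA)) with (tau E0) by ring.
    rewrite Hgf; [reflexivity | lra].
  - unfold c. replace (tA + (tau E0 - tA)) with (tau E0) by ring.
    rewrite Hgf; [reflexivity | lra].
  - unfold c. replace (tA + (tau E1 - tau E0) + (tau E0 - tA)) with (tau E1) by ring.
    rewrite Hgf; [reflexivity | lra].
Qed.

(* The infall branch [u < 0] is parametrised by [s = -x], on which the
   time [t] is increasing: [dt/ds = 1 / |v|]. *)
Definition sq_speed (xA u s : R) := u * u - 2 / s - 2 / xA.
Definition slowness (xA u s : R) := / sqrt (sq_speed xA u s).
Definition infall_clock (xA u s : R) : R := RInt (slowness xA u) (- xA) s.
Definition infall_time (xA xB u : R) : R := infall_clock xA u (- xB).

(* How far beyond [x = xA] the squared speed [sq_speed] stays positive. *)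
Definition infall_margin (xA u : R) := Rmin xA (u * u * xA * xA / 4).

Lemma infall_margin_pos xA u : 0 < xA -> u <> 0 -> 0 < infall_margin xA u.
Proof.
  intros HxA Hu. pose proof (Rsqr_pos_lt u Hu). unfold Rsqr in *.
  apply Rmin_pos; [lra|]. apply Rdiv_lt_0_compat; [|lra].
  apply Rmult_lt_0_compat; [|lra]. apply Rmult_lt_0_compat; lra.
Qed.

Lemma infall_margin_mono xA u1 u2 : u1 * u1 <= u2 * u2 ->
  infall_margin xA u1 <= infall_margin xA u2.
Proof.
  intros H. unfold infall_margin. apply Rmin_glb; [apply Rmin_l|].
  eapply Rle_trans; [apply Rmin_r|]. unfold Rdiv. apply Rmult_le_compat_r; [lra|].
  replace (u1 * u1 * xA * xA) with ((u1 * u1) * (xA * xA)) by ring.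
  replace (u2 * u2 * xA * xA) with ((u2 * u2) * (xA * xA)) by ring.
  apply Rmult_le_compat_r; nra.
Qed.

Lemma sq_speed_pos xA u s : 0 < xA -> u <> 0 -> - xA - infall_margin xA u < s < 0 ->
  0 < sq_speed xA u s.
Proof.
  intros HxA Hu Hs. pose proof (Rsqr_pos_lt u Hu). unfold Rsqr in *.
  assert (Hd1 : infall_margin xA u <= xA) by apply Rmin_l.
  assert (Hd2 : infall_margin xA u <= u * u * xA * xA / 4) by apply Rmin_r.
  set (p := - s).
  assert (Hq : (2 / p - 2 / xA) * (p * xA) = 2 * (xA - p)) by (unfold p; field; lra).
  unfold sq_speed. replace (2 / s) with (- (2 / p)) by (unfold p; field; lra).
  assert (0 < p * xA) by (unfold p; nra).
  destruct (Rle_lt_dec p xA).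
  - enough (0 <= 2 / p - 2 / xA) by lra.
    destruct (Rle_lt_dec 0 (2 / p - 2 / xA)); [auto | nra].
  - enough (- (u * u) / 2 < 2 / p - 2 / xA) by lra.
    destruct (Rlt_le_dec (- (u * u) / 2) (2 / p - 2 / xA)) as [|Hle]; [auto|].
    assert (u * u * (xA * xA) < u * u * (p * xA)) by (apply Rmult_lt_compat_l; nra).
    assert ((2 / p - 2 / xA) * (p * xA) <= - (u * u) / 2 * (p * xA))
      by (apply Rmult_le_compat_r; lra).
    unfold p in *. nra.
Qed.

Lemma sq_speed_dlim xA u s : s <> 0 -> derivable_pt_lim (sq_speed xA u) s (2 / (s * s)).
Proof.
  intros Hs. apply is_derive_Reals. unfold sq_speed. auto_derive; [exact Hs|]. field. exact Hs.
Qed.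

Lemma slowness_dlim xA u s : s <> 0 -> 0 < sq_speed xA u s ->
  derivable_pt_lim (slowness xA u) s
    (- (2 / (s * s) / (2 * sqrt (sq_speed xA u s))) /
       (sqrt (sq_speed xA u s) * sqrt (sq_speed xA u s))).
Proof.
  intros Hs Hr. apply (dlim_inv (fun s => sqrt (sq_speed xA u s))).
  - apply (dlim_sqrt (sq_speed xA u)); [apply sq_speed_dlim|]; auto.
  - pose proof (sqrt_lt_R0 _ Hr). lra.
Qed.

Section InfallClock.
Variables (xA u : R).
Hypotheses (HxA : 0 < xA) (Hu : u <> 0).

Lemma slowness_continuous s : - xA - infall_margin xA u < s < 0 -> continuous (slowness xA u) s.
Proof.
  intro Hs. apply continuity_pt_filterlim. eapply dlim_continuity_pt.
  apply slowness_dlim; [lra|]. now apply sq_speed_pos.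
Qed.

Lemma slowness_pos s : - xA - infall_margin xA u < s < 0 -> 0 < slowness xA u s.
Proof. intro. apply Rinv_0_lt_compat, sqrt_lt_R0. now apply sq_speed_pos. Qed.

Lemma slowness_ex_RInt a b : - xA - infall_margin xA u < a < 0 ->
  - xA - infall_margin xA u < b < 0 -> ex_RInt (slowness xA u) a b.
Proof.
  intros Ha Hb. apply (ex_RInt_continuous (V := R_CompleteNormedModule)).
  intros z [Hz1 Hz2]. apply slowness_continuous. split.
  - eapply Rlt_le_trans; [|exact Hz1]. apply Rmin_case; lra.
  - eapply Rle_lt_trans; [exact Hz2|]. apply Rmax_case; lra.
Qed.

Lemma infall_clock_dlim s : - xA - infall_margin xA u < s < 0 ->
  derivable_pt_lim (infall_clock xA u) s (slowness xA u s).
Proof.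
  intro Hs. apply is_derive_Reals. pose proof (infall_margin_pos xA u HxA Hu).
  apply (is_derive_RInt (V := R_NormedModule) _ (infall_clock xA u) (- xA) s);
    [|now apply slowness_continuous].
  set (e := Rmin (s + xA + infall_margin xA u) (- s) / 2).
  assert (He : 0 < e) by (apply Rdiv_lt_0_compat; [apply Rmin_pos|]; lra).
  exists (mkposreal e He). intros y Hy.
  apply (RInt_correct (V := R_CompleteNormedModule)).
  apply slowness_ex_RInt; [lra|].
  assert (Rmin (s + xA + infall_margin xA u) (- s) <= s + xA + infall_margin xA u) by apply Rmin_l.
  assert (Rmin (s + xA + infall_margin xA u) (- s) <= - s) by apply Rmin_r.
  change (Rabs (y - s) < e) in Hy. apply Rabs_def2 in Hy. unfold e in *. lra.
Qed.

End InfallClock.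

Lemma infall_clock_start xA u : infall_clock xA u (- xA) = 0.
Proof. unfold infall_clock. now rewrite RInt_point. Qed.

(* [infall_clock (- x t) - t] is a first integral along an infall. *)
Lemma infall_time_formula x v tA tB xA xB : 0 < xB -> xB < xA ->
  radial_solution x v tA tB -> tA <= tB -> x tA = xA -> x tB = xB -> v tA < 0 ->
  tB - tA = infall_time xA xB (v tA).
Proof.
  intros HB HBA Hs Hab HxA HxB Hu.
  assert (Hvneg : forall t, tA <= t <= tB -> v t < 0).
  { intros t Ht. destruct (Rle_lt_or_eq_dec _ _ (proj1 Ht)) as [Hlt | <-]; [|exact Hu].
    pose proof (radial_velocity_decr x v tA tB Hs tA t). lra. }
  assert (Hxdom : forall t, tA <= t <= tB -> xB <= x t <= xA).
  { assert (Hd : forall s t, tA <= s -> s < t -> t <= tB -> x t < x s).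
    { apply decr_of_dlim_neg. intros t Ht. exists (v t). split; [apply Hs | apply Hvneg]; auto. }
    intros t Ht. split.
    - destruct (Rle_lt_or_eq_dec _ _ (proj2 Ht)) as [H | ->]; [|lra].
      pose proof (Hd t tB); lra.
    - destruct (Rle_lt_or_eq_dec _ _ (proj1 Ht)) as [H | <-]; [|lra].
      pose proof (Hd tA t); lra. }
  set (u := v tA) in *.
  pose proof (infall_margin_pos xA u ltac:(lra) ltac:(lra)).
  assert (Hconst : infall_clock xA u (- x tB) - tB = infall_clock xA u (- x tA) - tA).
  { apply (const_of_dlim_0 (fun t => infall_clock xA u (- x t) - t)); [lra|].
    intros t Ht. destruct (Hs t Ht) as [Hxt [Hdx Hdv]].
    specialize (Hxdom t Ht). specialize (Hvneg t Ht).
    assert (Hsq : sqrt (sq_speed xA u (- x t)) = - v t).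
    { pose proof (radial_energy x v tA tB Hs t Ht) as He. fold u in He. rewrite HxA in He.
      replace (sq_speed xA u (- x t)) with (Rsqr (v t))
        by (unfold sq_speed, Rsqr; replace (2 / - x t) with (- (2 / x t)) by (field; lra); lra).
      rewrite sqrt_Rsqr_abs. apply Rabs_left. lra. }
    eapply dlim_eq.
    - apply dlim_minus; [|apply dlim_id].
      apply (dlim_comp (fun t => - x t) (infall_clock xA u)); [apply dlim_opp; exact Hdx|].
      apply infall_clock_dlim; lra.
    - unfold slowness. rewrite Hsq. field. lra. }
  rewrite HxA, HxB, infall_clock_start in Hconst. unfold infall_time. lra.
Qed.

Lemma infall_exists tA xA xB u : 0 < xB -> xB < xA -> u < 0 ->
  exists x v T, 0 < T /\ radial_solution x v tA (tA + T) /\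
    x tA = xA /\ v tA = u /\ x (tA + T) = xB.
Proof.
  intros HB HBA Hu.
  pose proof (infall_margin_pos xA u ltac:(lra) ltac:(lra)).
  destruct (radial_solution_of_param (infall_clock xA u) (slowness xA u)
              (fun s => - s) (fun s => - sqrt (sq_speed xA u s))
              (- xA - infall_margin xA u / 2) (- xB / 2) (- xA) (- xB) tA)
    as [HT [x [v [Hs [H0 [H1 H2]]]]]]; try lra.
  - intros s Hs. split; [apply infall_clock_dlim | apply slowness_pos]; lra.
  - intros s Hs.
    assert (Hr : 0 < sq_speed xA u s) by (apply sq_speed_pos; lra).
    pose proof (sqrt_lt_R0 _ Hr).
    split; [lra | split].
    + eapply dlim_eq; [apply dlim_opp, dlim_id|]. unfold slowness. field. lra.
    + eapply dlim_eq.
      * apply dlim_opp, (dlim_sqrt (sq_speed xA u)); [apply sq_speed_dlim; lra | exact Hr].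
      * unfold slowness. field. lra.
  - eexists x, v, _. split; [exact HT | split; [exact Hs|]].
    rewrite H0, H1, H2. split; [ring | split; [|ring]].
    unfold sq_speed. replace (u * u - 2 / - xA - 2 / xA) with (Rsqr u) by (unfold Rsqr; field; lra).
    rewrite sqrt_Rsqr_abs, Rabs_left; [ring | exact Hu].
Qed.

Definition dslowness_du (xA u s : R) := - u / (sq_speed xA u s * sqrt (sq_speed xA u s)).

Lemma slowness_dlim_u xA u s : s <> 0 -> 0 < sq_speed xA u s ->
  derivable_pt_lim (fun u => slowness xA u s) u (dslowness_du xA u s).
Proof.
  intros Hs Hr. pose proof (sqrt_lt_R0 _ Hr). pose proof (sqrt_sqrt _ (Rlt_le _ _ Hr)).
  eapply dlim_eq.
  - apply (dlim_inv (fun u => sqrt (sq_speed xA u s))); [|lra].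
    apply (dlim_sqrt (fun u => sq_speed xA u s)); [|exact Hr].
    apply is_derive_Reals. unfold sq_speed. auto_derive; [exact I | reflexivity].
  - unfold dslowness_du. rewrite H0. field. lra.
Qed.

Lemma dslowness_du_continuous xA u s : 0 < sq_speed xA u s -> s <> 0 ->
  continuity_2d_pt (dslowness_du xA) u s.
Proof.
  intros Hr Hs. pose proof (sqrt_lt_R0 _ Hr).
  assert (Hc : continuity_2d_pt (fun u s => sq_speed xA u s) u s).
  { apply continuity_2d_pt_ext with (f := fun u s => u * u - 2 * / s - 2 / xA);
      [intros; reflexivity|].
    apply continuity_2d_pt_minus; [|apply continuity_2d_pt_const].
    apply continuity_2d_pt_minus.
    - apply continuity_2d_pt_mult; apply continuity_2d_pt_id1.
    - apply continuity_2d_pt_mult; [apply continuity_2d_pt_const|].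
      apply continuity_2d_pt_inv; [apply continuity_2d_pt_id2 | exact Hs]. }
  assert (Hsq : continuity_2d_pt (fun u s => sqrt (sq_speed xA u s)) u s).
  { apply (continuity_1d_2d_pt_comp sqrt); [|exact Hc]. apply continuity_pt_sqrt. lra. }
  apply continuity_2d_pt_ext with
    (f := fun u s => - u * / (sq_speed xA u s * sqrt (sq_speed xA u s)));
    [intros; reflexivity|].
  apply continuity_2d_pt_mult; [apply continuity_2d_pt_opp, continuity_2d_pt_id1|].
  apply continuity_2d_pt_inv; [now apply continuity_2d_pt_mult|].
  apply Rgt_not_eq, Rmult_lt_0_compat; auto.
Qed.

Lemma continuity_2d_pt_slice f x y : continuity_2d_pt f x y -> continuous (fun s => f x s) y.
Proof.
  intro H. apply continuity_pt_filterlim. intros eps Heps.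
  destruct (H (mkposreal eps Heps)) as [d Hd].
  exists d. split; [apply cond_pos|]. intros z [_ Hz].
  apply (Hd x z); [rewrite Rminus_diag, Rabs_R0; apply cond_pos | exact Hz].
Qed.

Lemma infall_domain_near xA xB u0 : 0 < xB -> xB < xA -> u0 < 0 ->
  exists dd, 0 < dd /\ forall u s, Rabs (u - u0) < dd -> - xA - dd < s < - xB + dd ->
    0 < sq_speed xA u s /\ s <> 0 /\ u <> 0 /\ - xA - infall_margin xA u < s.
Proof.
  intros HB HBA Hu0.
  assert (Hm : 0 < infall_margin xA (u0 / 2)) by (apply infall_margin_pos; lra).
  set (dd := Rmin (- u0 / 2) (Rmin (xB / 2) (infall_margin xA (u0 / 2)))).
  assert (Hdd1 : dd <= - u0 / 2) by apply Rmin_l.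
  assert (Hdd2 : dd <= xB / 2) by (eapply Rle_trans; [apply Rmin_r | apply Rmin_l]).
  assert (Hdd3 : dd <= infall_margin xA (u0 / 2))
    by (eapply Rle_trans; [apply Rmin_r | apply Rmin_r]).
  assert (Hdd : 0 < dd) by (apply Rmin_pos; [lra | apply Rmin_pos; lra]).
  exists dd. split; [exact Hdd|]. intros u s Hu Hs. apply Rabs_def2 in Hu.
  assert (infall_margin xA (u0 / 2) <= infall_margin xA u) by (apply infall_margin_mono; nra).
  split; [apply sq_speed_pos|]; lra.
Qed.

(* Differentiation under the integral sign: [dT/du] is the integral of
   [- u / |v|^3 > 0] over the path. *)
Lemma infall_time_dlim xA xB u0 : 0 < xB -> xB < xA -> u0 < 0 ->
  exists d, derivable_pt_lim (infall_time xA xB) u0 d /\ 0 < d.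
Proof.
  intros HB HBA Hu0.
  destruct (infall_domain_near xA xB u0 HB HBA Hu0) as [dd [Hdd Hnear]].
  assert (Hnear0 : forall s, - xA - dd < s < - xB + dd ->
            0 < sq_speed xA u0 s /\ s <> 0 /\ u0 <> 0 /\ - xA - infall_margin xA u0 < s)
    by (intros s Hs; apply Hnear; [rewrite Rminus_diag, Rabs_R0 | ]; lra).
  assert (Hmin : Rmin (- xA) (- xB) = - xA) by (apply Rmin_left; lra).
  assert (Hmax : Rmax (- xA) (- xB) = - xB) by (apply Rmax_right; lra).
  assert (HD : is_derive (fun u => RInt (fun s => slowness xA u s) (- xA) (- xB)) u0
             (RInt (fun s => Derive (fun u => slowness xA u s) u0) (- xA) (- xB))).
  { apply (is_derive_RInt_param (fun u s => slowness xA u s)).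
    - exists (mkposreal dd Hdd). intros u Hu s Hs. rewrite Hmin, Hmax in Hs.
      destruct (Hnear u s Hu ltac:(lra)) as [Hr [Hs0 _]].
      exists (dslowness_du xA u s). apply is_derive_Reals. now apply slowness_dlim_u.
    - intros s Hs. rewrite Hmin, Hmax in Hs.
      destruct (Hnear0 s ltac:(lra)) as [Hr [Hs0 _]].
      apply continuity_2d_pt_ext_loc with (f := dslowness_du xA);
        [|now apply dslowness_du_continuous].
      exists (mkposreal dd Hdd). intros u s' Hu Hs'. simpl in Hu, Hs'. apply Rabs_def2 in Hs'.
      destruct (Hnear u s' Hu ltac:(lra)) as [Hr' [Hs0' _]].
      symmetry. apply is_derive_unique, is_derive_Reals. now apply slowness_dlim_u.
    - exists (mkposreal dd Hdd). intros u Hu.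
      destruct (Hnear u (- xB) Hu ltac:(lra)) as [_ [_ [Hu' Hdom]]].
      pose proof (infall_margin_pos xA u ltac:(lra) Hu').
      apply slowness_ex_RInt; [lra | exact Hu' | lra | lra]. }
  eexists. split; [apply is_derive_Reals; exact HD|].
  rewrite (RInt_ext _ (dslowness_du xA u0)).
  - apply RInt_gt_0; [lra | |].
    + intros s Hs. destruct (Hnear0 s ltac:(lra)) as [Hr _].
      pose proof (sqrt_lt_R0 _ Hr). unfold dslowness_du.
      apply Rdiv_lt_0_compat; [lra|]. now apply Rmult_lt_0_compat.
    + intros s Hs. destruct (Hnear0 s ltac:(lra)) as [Hr [Hs0 _]].
      apply continuity_2d_pt_slice. now apply dslowness_du_continuous.
  - intros s Hs. rewrite Hmin, Hmax in Hs. destruct (Hnear0 s ltac:(lra)) as [Hr [Hs0 _]].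
    apply is_derive_unique, is_derive_Reals. now apply slowness_dlim_u.
Qed.

(* The speed only grows during the fall, so the time is at most
   distance / initial speed. *)
Lemma infall_time_le xA xB u : 0 < xB -> xB < xA -> u < 0 ->
  infall_time xA xB u <= (xA - xB) / (- u).
Proof.
  intros HB HBA Hu. pose proof (infall_margin_pos xA u ltac:(lra) ltac:(lra)).
  unfold infall_time, infall_clock.
  apply Rle_trans with (RInt (fun _ => / (- u)) (- xA) (- xB)).
  - apply RInt_le; [lra | apply slowness_ex_RInt; lra | apply ex_RInt_const |].
    intros s Hs. unfold slowness.
    assert (Hr : u * u <= sq_speed xA u s).
    { unfold sq_speed. replace (2 / s) with (- (2 / (- s))) by (field; lra).
      enough (2 / xA <= 2 / (- s)) by lra.
      unfold Rdiv. apply Rmult_le_compat_l; [lra|]. apply Rinv_le_contravar; lra. }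
    assert (- u <= sqrt (sq_speed xA u s)).
    { rewrite <- (sqrt_square (- u)) by lra. apply sqrt_le_1_alt. lra. }
    apply Rinv_le_contravar; lra.
  - rewrite RInt_const. right. cbn. unfold mult; simpl. field. lra.
Qed.

(* For [0 <= u] the arc is a degenerate ellipse with semi-major axis
   [a = 1 / (2/xA - u^2)]; in eccentric anomaly [E] it reads
   [x = a (1 - cos E)], [t = a sqrt a (E - sin E)], and
   [kepler_clock a x v = a sqrt a (E - sin E)] expresses [t] in terms of
   the state, since [sqrt a v = cot (E/2)]. *)
Definition semi_major (xA u : R) := / (2 / xA - u * u).
Definition kepler_clock (a x v : R) := a * sqrt a * (PI - 2 * atan (sqrt a * v)) - a * x * v.
Definition arrival_velocity (xA xB u : R) := - sqrt (u * u + 2 / xB - 2 / xA).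
Definition ellipse_time (xA xB u : R) :=
  kepler_clock (semi_major xA u) xB (arrival_velocity xA xB u) -
  kepler_clock (semi_major xA u) xA u.

Lemma semi_major_pos xA u : u * u < 2 / xA -> 0 < semi_major xA u.
Proof. intro. apply Rinv_0_lt_compat. lra. Qed.

Lemma kepler_clock_dlim a x v t : 0 < a -> 0 < x t -> derivable_pt_lim x t (v t) ->
  derivable_pt_lim v t (- / (x t * x t)) -> v t * v t = 2 / x t - / a ->
  derivable_pt_lim (fun t => kepler_clock a (x t) (v t)) t 1.
Proof.
  intros Ha Hx Hdx Hdv Hvv. unfold kepler_clock.
  pose proof (sqrt_lt_R0 a Ha) as HS. pose proof (sqrt_sqrt a ltac:(lra)) as HSS.
  eapply dlim_eq.
  - apply (dlim_minus (fun t => a * sqrt a * (PI - 2 * atan (sqrt a * v t)))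
                      (fun t => a * x t * v t)).
    + apply (dlim_scal (a * sqrt a) (fun t => PI - 2 * atan (sqrt a * v t))).
      apply (dlim_minus (fun _ => PI) (fun t => 2 * atan (sqrt a * v t))); [apply dlim_const|].
      apply (dlim_scal 2 (fun t => atan (sqrt a * v t))).
      apply (dlim_comp (fun t => sqrt a * v t) atan);
        [apply (dlim_scal (sqrt a) v); exact Hdv | apply derivable_pt_lim_atan].
    + apply (dlim_mult (fun t => a * x t) v); [apply (dlim_scal a x); exact Hdx | exact Hdv].
  - cbv beta.
    replace (1 + (sqrt a * v t) ^ 2) with (2 * a / x t) by
      (replace ((sqrt a * v t) ^ 2) with ((sqrt a * sqrt a) * (v t * v t)) by ring;
       rewrite HSS, Hvv; field; lra).
    replace (a * v t * v t) with (a * (v t * v t)) by ring. rewrite Hvv.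
    field_simplify_eq; [|lra].
    replace (sqrt a ^ 2) with a by (simpl; lra). ring.
Qed.

Lemma ellipse_time_formula x v tA tB xA xB : 0 < xB -> xB < xA ->
  radial_solution x v tA tB -> tA <= tB -> x tA = xA -> x tB = xB ->
  v tA * v tA < 2 / xA -> tB - tA = ellipse_time xA xB (v tA).
Proof.
  intros HB HBA Hs Hab HxA HxB Hu.
  pose proof (radial_arc_final_velocity_neg x v tA tB xA xB HBA Hs Hab HxA HxB) as HvB.
  set (u := v tA) in *.
  set (a := semi_major xA u). assert (Ha : 0 < a) by now apply semi_major_pos.
  assert (Hconst : kepler_clock a (x tB) (v tB) - tB = kepler_clock a (x tA) (v tA) - tA).
  { apply (const_of_dlim_0 (fun t => kepler_clock a (x t) (v t) - t)); [lra|].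
    intros t Ht. destruct (Hs t Ht) as [Hxt [Hdx Hdv]].
    eapply dlim_eq; [apply (dlim_minus (fun t => kepler_clock a (x t) (v t)) (fun t => t))|].
    - apply kepler_clock_dlim; auto.
      pose proof (radial_energy x v tA tB Hs t Ht) as H. fold u in H. rewrite HxA in H.
      unfold a, semi_major. rewrite Rinv_inv. lra.
    - apply dlim_id.
    - ring. }
  assert (HvBv : v tB = arrival_velocity xA xB u).
  { pose proof (radial_energy x v tA tB Hs tB ltac:(lra)) as H. fold u in H.
    rewrite HxA, HxB in H. unfold arrival_velocity.
    replace (u * u + 2 / xB - 2 / xA) with (Rsqr (v tB)) by (unfold Rsqr; lra).
    rewrite sqrt_Rsqr_abs, Rabs_left; [ring | exact HvB]. }
  unfold ellipse_time. fold a. rewrite HxA, HxB, HvBv in Hconst. fold u in Hconst. lra.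
Qed.

Lemma cos_lt_1 E : 0 < E < 2 * PI -> cos E < 1.
Proof.
  intros. replace E with (2 * (E / 2)) by field. rewrite cos_2a_sin.
  assert (0 < sin (E / 2)) by (apply sin_gt_0; lra). nra.
Qed.

Lemma eccentric_anomaly_param a E : 0 < a -> cos E < 1 ->
  let X E := a * (1 - cos E) in
  let V E := sin E / (sqrt a * (1 - cos E)) in
  let tau' E := a * sqrt a * (1 - cos E) in
  0 < X E /\ derivable_pt_lim X E (V E * tau' E) /\
  derivable_pt_lim V E (- tau' E / (X E * X E)).
Proof.
  intros Ha Hc X V tau'. pose proof (sqrt_lt_R0 a Ha) as HS.
  pose proof (sqrt_sqrt a ltac:(lra)) as HSS.
  split; [|split]; unfold X, V, tau'.
  - apply Rmult_lt_0_compat; lra.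
  - apply is_derive_Reals. auto_derive; [exact I|]. field. lra.
  - apply is_derive_Reals. auto_derive; [repeat split; nra|].
    pose proof (sin2_cos2 E) as Hsc. unfold Rsqr in Hsc.
    field_simplify_eq; [|lra].
    replace (sqrt a ^ 3) with (sqrt a * sqrt a * sqrt a) by ring. rewrite HSS.
    replace (sin E ^ 2) with (1 - cos E ^ 2) by nra. ring.
Qed.

Lemma start_anomaly xA u : 0 < xA -> 0 <= u -> u * u < 2 / xA ->
  let a := semi_major xA u in let EA := acos (xA * u * u - 1) in
  0 < EA <= PI /\ a * (1 - cos EA) = xA /\ sin EA / (sqrt a * (1 - cos EA)) = u.
Proof.
  intros HxA Hu Huu a EA.
  assert (Ha : 0 < a) by now apply semi_major_pos.
  pose proof (sqrt_lt_R0 a Ha) as HS. pose proof (sqrt_sqrt a ltac:(lra)) as HSS.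
  assert (Hxu : xA * (u * u) < 2).
  { apply Rmult_lt_compat_l with (r := xA) in Huu; [|lra].
    replace (xA * (2 / xA)) with 2 in Huu by (field; lra). lra. }
  set (cA := xA * u * u - 1) in EA.
  assert (HcA : -1 <= cA < 1) by (unfold cA; split; nra).
  assert (Hxa : a * (1 - cA) = xA) by (unfold cA, a, semi_major; field; lra).
  split; [|unfold EA; rewrite cos_acos, sin_acos by lra; split; [exact Hxa|]].
  - destruct (acos_bound cA) as [H0 H1]. split; [|exact H1].
    destruct (Rle_lt_or_eq_dec _ _ H0) as [|Heq]; [assumption|].
    pose proof (cos_acos cA ltac:(lra)) as Hc. rewrite <- Heq, cos_0 in Hc. lra.
  - assert (Hq : 1 - cA² = (u * sqrt a * (1 - cA)) ^ 2).
    { replace ((u * sqrt a * (1 - cA)) ^ 2)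
        with (u * u * (sqrt a * sqrt a) * (1 - cA) * (1 - cA)) by ring.
      rewrite HSS.
      replace (u * u * a * (1 - cA) * (1 - cA)) with (u * u * (a * (1 - cA)) * (1 - cA)) by ring.
      rewrite Hxa. unfold cA, Rsqr. ring. }
    rewrite Hq, sqrt_pow2 by (apply Rmult_le_pos; [apply Rmult_le_pos|]; lra).
    field. split; lra.
Qed.

Lemma end_anomaly a xB : 0 < xB < 2 * a ->
  let EB := 2 * PI - acos (1 - xB / a) in PI < EB < 2 * PI /\ a * (1 - cos EB) = xB.
Proof.
  intros HxB EB.
  assert (HcB : -1 < 1 - xB / a < 1).
  { assert (0 < xB / a < 2); [|lra].
    split; [apply Rdiv_lt_0_compat; lra|].
    apply Rmult_lt_reg_r with a; [lra|]. replace (xB / a * a) with xB by (field; lra). lra. }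
  split; [pose proof (acos_bound_lt _ HcB); unfold EB; lra|].
  unfold EB. rewrite cos_minus, cos_2PI, sin_2PI, cos_acos by lra. field. lra.
Qed.

Lemma ellipse_exists tA xA xB u : 0 < xB -> xB < xA -> 0 <= u -> u * u < 2 / xA ->
  exists x v T, 0 < T /\ radial_solution x v tA (tA + T) /\
    x tA = xA /\ v tA = u /\ x (tA + T) = xB.
Proof.
  intros HB HBA Hu Huu.
  destruct (start_anomaly xA u ltac:(lra) Hu Huu) as [HEA [HxA HvA]].
  set (a := semi_major xA u) in *. set (EA := acos (xA * u * u - 1)) in *.
  assert (Ha : 0 < a) by now apply semi_major_pos.
  assert (H2a : xA <= 2 * a).
  { unfold a, semi_major. replace xA with (2 * / (2 / xA)) at 1 by (field; lra).
    apply Rmult_le_compat_l; [lra|]. apply Rinv_le_contravar; nra. }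
  destruct (end_anomaly a xB ltac:(lra)) as [HEB HxB].
  set (EB := 2 * PI - acos (1 - xB / a)) in *.
  assert (Hcos : forall E, EA / 2 <= E <= (EB + 2 * PI) / 2 -> cos E < 1)
    by (intros E HE; apply cos_lt_1; lra).
  destruct (radial_solution_of_param
              (fun E => a * sqrt a * (E - sin E)) (fun E => a * sqrt a * (1 - cos E))
              (fun E => a * (1 - cos E)) (fun E => sin E / (sqrt a * (1 - cos E)))
              (EA / 2) ((EB + 2 * PI) / 2) EA EB tA)
    as [HT [x [v [Hs [H0 [H1 H2]]]]]]; try lra.
  - intros E HE. specialize (Hcos E HE). pose proof (sqrt_lt_R0 a Ha). split.
    + apply is_derive_Reals. auto_derive; [exact I | ring].
    + apply Rmult_lt_0_compat; [apply Rmult_lt_0_compat|]; lra.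
  - intros E HE. apply eccentric_anomaly_param; [exact Ha | apply Hcos; lra].
  - eexists x, v, _. split; [exact HT | split; [exact Hs|]]. now rewrite H0, H1, H2.
Qed.

Section EllipseTime.
Variables xA xB : R.
Hypotheses (HB : 0 < xB) (HBA : xB < xA).

Let A u := semi_major xA u.
Let S u := sqrt (A u).
Let W u := arrival_velocity xA xB u.

Lemma ellipse_time_eq u : ellipse_time xA xB u =
  2 * A u * S u * (atan (S u * u) - atan (S u * W u)) + A u * (xA * u - xB * W u).
Proof. unfold ellipse_time, kepler_clock, S, W, A. ring. Qed.

Lemma arrival_velocity_neg u : W u < 0.
Proof.
  unfold W, arrival_velocity.
  enough (Hr : 0 < u * u + 2 / xB - 2 / xA) by (pose proof (sqrt_lt_R0 _ Hr); lra).
  assert (2 / xA < 2 / xB).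
  { unfold Rdiv. apply Rmult_lt_compat_l; [lra|]. apply Rinv_lt_contravar; nra. }
  nra.
Qed.

Lemma below_escape_mult u : u * u < 2 / xA -> u * u * xA < 2.
Proof.
  intro Hu. apply Rmult_lt_compat_r with (r := xA) in Hu; [|lra].
  replace (2 / xA * xA) with 2 in Hu by (field; lra). exact Hu.
Qed.

Lemma semi_major_dlim u : u * u < 2 / xA -> derivable_pt_lim A u (2 * u * A u * A u).
Proof.
  intro Hu. pose proof (below_escape_mult u Hu).
  apply is_derive_Reals. unfold A, semi_major. auto_derive; [apply Rgt_not_eq; lra|].
  field. split; lra.
Qed.

Lemma sqrt_semi_major_dlim u : u * u < 2 / xA -> derivable_pt_lim S u (u * A u * S u).
Proof.
  intro Hu. pose proof (semi_major_pos xA u Hu) as Ha. fold (A u) in Ha.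
  pose proof (sqrt_lt_R0 _ Ha) as HS. pose proof (sqrt_sqrt (A u) ltac:(lra)) as HSS.
  unfold S. eapply dlim_eq; [apply (dlim_sqrt A); [apply semi_major_dlim | ]; auto|].
  field_simplify_eq; [|lra]. replace (sqrt (A u) ^ 2) with (A u) by (simpl; lra). ring.
Qed.

Lemma arrival_velocity_dlim u : derivable_pt_lim W u (u / W u).
Proof.
  pose proof (arrival_velocity_neg u) as Hw. unfold W, arrival_velocity in *.
  assert (Hr : 0 < u * u + 2 / xB - 2 / xA).
  { destruct (Rlt_le_dec 0 (u * u + 2 / xB - 2 / xA)) as [|Hle]; [assumption|].
    rewrite sqrt_neg_0 in Hw; lra. }
  eapply dlim_eq.
  - apply dlim_opp, (dlim_sqrt (fun u => u * u + 2 / xB - 2 / xA)); [|exact Hr].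
    apply is_derive_Reals. auto_derive; [exact I | reflexivity].
  - field. lra.
Qed.

Lemma atan_dlim_S_mult f f' u : u * u < 2 / xA -> derivable_pt_lim f u f' ->
  derivable_pt_lim (fun u => atan (S u * f u)) u
    ((u * A u * S u * f u + S u * f') / (1 + A u * (f u * f u))).
Proof.
  intros Hu Hf. pose proof (semi_major_pos xA u Hu) as Ha. fold (A u) in Ha.
  assert (HSS : S u * S u = A u) by exact (sqrt_sqrt (A u) ltac:(lra)).
  eapply dlim_eq.
  - apply (dlim_comp (fun u => S u * f u) atan); [|apply derivable_pt_lim_atan].
    apply (dlim_mult S f); [apply sqrt_semi_major_dlim; auto | exact Hf].
  - replace ((S u * f u) ^ 2) with (S u * S u * (f u * f u)) by ring.
    rewrite HSS.
    assert (0 <= A u * (f u * f u)) by (apply Rmult_le_pos; nra).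
    field. lra.
Qed.

Definition ellipse_time_deriv u :=
  (2 * (2 * u * A u * A u) * S u + 2 * A u * (u * A u * S u)) *
     (atan (S u * u) - atan (S u * W u)) + 2 * A u * S u * (S u - u * S u / W u) +
  (2 * u * A u * A u * (xA * u - xB * W u) + A u * (xA - xB * (u / W u))).

Lemma ellipse_time_dlim u : u * u < 2 / xA ->
  derivable_pt_lim (ellipse_time xA xB) u (ellipse_time_deriv u).
Proof.
  intro Hu. pose proof (semi_major_pos xA u Hu) as Ha. fold (A u) in Ha.
  pose proof (arrival_velocity_neg u) as Hw.
  apply (dlim_locally_ext (fun u => 2 * A u * S u * (atan (S u * u) - atan (S u * W u)) +
                                    A u * (xA * u - xB * W u)) _ _ _ 1);
    [lra | intros; symmetry; apply ellipse_time_eq|].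
  assert (0 <= A u * (u * u)) by (apply Rmult_le_pos; nra).
  assert (0 <= A u * (W u * W u)) by (apply Rmult_le_pos; nra).
  eapply dlim_eq.
  - apply (dlim_plus (fun u => 2 * A u * S u * (atan (S u * u) - atan (S u * W u)))
                     (fun u => A u * (xA * u - xB * W u))).
    + apply (dlim_mult (fun u => 2 * A u * S u) (fun u => atan (S u * u) - atan (S u * W u))).
      * apply (dlim_mult (fun u => 2 * A u) S);
          [apply (dlim_scal 2 A), semi_major_dlim | apply sqrt_semi_major_dlim]; exact Hu.
      * apply (dlim_minus (fun u => atan (S u * u)) (fun u => atan (S u * W u)));
          apply atan_dlim_S_mult;
          [exact Hu | apply dlim_id | exact Hu | apply arrival_velocity_dlim].
    + apply (dlim_mult A (fun u => xA * u - xB * W u)); [apply semi_major_dlim; exact Hu|].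
      apply (dlim_minus (fun u => xA * u) (fun u => xB * W u));
        [apply (dlim_scal xA (fun u => u)), dlim_id |
         apply (dlim_scal xB W), arrival_velocity_dlim].
  - unfold ellipse_time_deriv. field. lra.
Qed.

Lemma ellipse_time_deriv_pos u : 0 <= u -> u * u < 2 / xA -> 0 < ellipse_time_deriv u.
Proof.
  intros Hu0 Hu. pose proof (semi_major_pos xA u Hu) as Ha. fold (A u) in Ha.
  assert (HS : 0 < S u) by now apply sqrt_lt_R0.
  pose proof (arrival_velocity_neg u) as Hw.
  assert (Hat : 0 < atan (S u * u) - atan (S u * W u)).
  { enough (atan (S u * W u) < atan (S u * u)) by lra.
    apply atan_increasing. apply Rmult_lt_compat_l; lra. }
  assert (Huw : 0 <= - u / W u).
  { replace (- u / W u) with (u * / (- W u)) by (field; lra).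
    apply Rmult_le_pos; [lra|]. left. apply Rinv_0_lt_compat. lra. }
  assert (0 <= u * A u) by (apply Rmult_le_pos; lra).
  assert (0 <= u * A u * A u) by (apply Rmult_le_pos; lra).
  assert (0 <= u * A u * A u * S u) by (apply Rmult_le_pos; lra).
  assert (0 <= xA * u) by (apply Rmult_le_pos; lra).
  assert (0 <= xB * (- u / W u)) by (apply Rmult_le_pos; lra).
  assert (0 < A u * S u) by now apply Rmult_lt_0_compat.
  unfold ellipse_time_deriv.
  replace (S u - u * S u / W u) with (S u * (1 + - u / W u)) by (field; lra).
  replace (xB * (u / W u)) with (- (xB * (- u / W u))) by (field; lra).
  assert (0 <= (2 * (2 * u * A u * A u) * S u + 2 * A u * (u * A u * S u)) *
               (atan (S u * u) - atan (S u * W u))) by (apply Rmult_le_pos; nra).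
  assert (0 < 2 * A u * S u * (S u * (1 + - u / W u)))
    by (apply Rmult_lt_0_compat; [lra | apply Rmult_lt_0_compat; lra]).
  assert (0 <= 2 * u * A u * A u * (xA * u - xB * W u)) by (apply Rmult_le_pos; nra).
  assert (0 < A u * (xA - - (xB * (- u / W u)))) by (apply Rmult_lt_0_compat; lra).
  lra.
Qed.

(* All terms of [ellipse_time_eq] are nonnegative; keep the one that
   blows up with [a]. *)
Lemma ellipse_time_ge u : 0 <= u -> u * u < 2 / xA -> A u * xA * u <= ellipse_time xA xB u.
Proof.
  intros Hu0 Hu. pose proof (semi_major_pos xA u Hu) as Ha. fold (A u) in Ha.
  assert (HS : 0 < S u) by now apply sqrt_lt_R0.
  pose proof (arrival_velocity_neg u) as Hw. rewrite ellipse_time_eq.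
  assert (0 < atan (S u * u) - atan (S u * W u)).
  { enough (atan (S u * W u) < atan (S u * u)) by lra.
    apply atan_increasing. apply Rmult_lt_compat_l; lra. }
  assert (0 <= 2 * A u * S u * (atan (S u * u) - atan (S u * W u))).
  { apply Rmult_le_pos; [|lra]. apply Rmult_le_pos; lra. }
  assert (0 <= A u * (- xB * W u)) by (apply Rmult_le_pos; nra).
  nra.
Qed.

End EllipseTime.

Lemma continuity_pt_ball f m e : continuity_pt f m -> 0 < e ->
  exists eta, 0 < eta /\ forall x, Rabs (x - m) < eta -> Rabs (f x - f m) < e.
Proof.
  intros Hc He. destruct (Hc e He) as [eta [Heta H]].
  exists eta. split; [exact Heta|]. intros x Hx.
  destruct (Req_dec x m) as [-> | Hne]; [rewrite Rminus_diag, Rabs_R0; exact He|].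
  exact (H x (conj (conj I (not_eq_sym Hne)) Hx)).
Qed.

Lemma continuity_pt_zero_of_left f a c : a < c -> continuity_pt f c ->
  (forall s, a <= s < c -> f s = 0) -> f c = 0.
Proof.
  intros Hac Hc Hz. destruct (Req_dec (f c) 0) as [|Hne]; [assumption|].
  destruct (continuity_pt_ball f c (Rabs (f c)) Hc (Rabs_pos_lt _ Hne)) as [eta [Heta H]].
  set (s := Rmax a (c - eta / 2)).
  assert (a <= s) by apply Rmax_l. assert (c - eta / 2 <= s) by apply Rmax_r.
  assert (s < c) by (apply Rmax_lub_lt; lra).
  specialize (H s ltac:(apply Rabs_def1; lra)). rewrite Hz in H by lra.
  rewrite Rminus_0_l, Rabs_Ropp in H. lra.
Qed.

(* [c] is the supremum of the [t] such that [f > 0] on [[a, t]]. *)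
Lemma first_zero (f : R -> R) a b : a < b ->
  (forall t, a <= t <= b -> continuity_pt f t) -> 0 < f a -> f b <= 0 ->
  exists c, a < c <= b /\ f c = 0 /\ forall s, a <= s < c -> 0 < f s.
Proof.
  intros Hab Hc Ha Hb.
  set (E := fun t => a <= t <= b /\ forall s, a <= s <= t -> 0 < f s).
  assert (HEa : E a) by (split; [lra | intros s Hs; replace s with a by lra; exact Ha]).
  destruct (completeness E) as [m [Hub Hlub]]; [exists b; intros t [Ht _]; lra | now exists a|].
  assert (Ham : a <= m) by now apply Hub.
  assert (Hmb : m <= b) by (apply Hlub; intros t [Ht _]; lra).
  assert (Hbelow : forall s, a <= s < m -> 0 < f s).
  { intros s Hs. destruct (Rlt_le_dec 0 (f s)) as [|Hs0]; [assumption|].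
    enough (m <= s) by lra. apply Hlub. intros t [Ht Ht'].
    destruct (Rle_lt_dec t s) as [|Hts]; [assumption|]. specialize (Ht' s ltac:(lra)). lra. }
  assert (Hma : a < m).
  { destruct (continuity_pt_ball f a (f a) (Hc a ltac:(lra)) Ha) as [eta [Heta H]].
    set (t := Rmin b (a + eta / 2)).
    assert (t <= b) by apply Rmin_l. assert (t <= a + eta / 2) by apply Rmin_r.
    assert (a < t) by (apply Rmin_glb_lt; lra).
    enough (HEt : E t) by (pose proof (Hub t HEt); lra).
    split; [lra|]. intros s Hs. specialize (H s ltac:(apply Rabs_def1; lra)).
    apply Rabs_def2 in H. lra. }
  assert (Hm0 : f m = 0).
  { destruct (Rtotal_order (f m) 0) as [Hneg | [| Hpos]]; [exfalso | assumption | exfalso].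
    - destruct (continuity_pt_ball f m (- f m) (Hc m ltac:(lra)) ltac:(lra)) as [eta [Heta H]].
      set (s := Rmax a (m - eta / 2)).
      assert (a <= s) by apply Rmax_l. assert (m - eta / 2 <= s) by apply Rmax_r.
      assert (s < m) by (apply Rmax_lub_lt; lra).
      specialize (H s ltac:(apply Rabs_def1; lra)). specialize (Hbelow s ltac:(lra)).
      apply Rabs_def2 in H. lra.
    - assert (Hmb' : m < b) by (destruct (Rle_lt_or_eq_dec _ _ Hmb) as [| ->]; lra).
      destruct (continuity_pt_ball f m (f m) (Hc m ltac:(lra)) Hpos) as [eta [Heta H]].
      set (t := Rmin b (m + eta / 2)).
      assert (t <= b) by apply Rmin_l. assert (t <= m + eta / 2) by apply Rmin_r.
      assert (m < t) by (apply Rmin_glb_lt; lra).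
      enough (HEt : E t) by (pose proof (Hub t HEt); lra).
      split; [lra|]. intros s Hs. destruct (Rlt_le_dec s m); [apply Hbelow; lra|].
      specialize (H s ltac:(apply Rabs_def1; lra)). apply Rabs_def2 in H. lra. }
  exists m. split; [lra | split; [exact Hm0 | exact Hbelow]].
Qed.

Lemma dlim_pos_incr_near f t l : derivable_pt_lim f t l -> 0 < l ->
  exists d, 0 < d /\ (forall h, 0 < h < d -> f t < f (t + h)) /\
    (forall h, - d < h < 0 -> f (t + h) < f t).
Proof.
  intros H Hl. destruct (H (l / 2) ltac:(lra)) as [d Hd].
  exists d. split; [apply cond_pos|]. split; intros h Hh.
  - assert (Hq := Hd h ltac:(lra) ltac:(rewrite Rabs_right; lra)). apply Rabs_def2 in Hq.
    assert (0 < (f (t + h) - f t) / h * h) by (apply Rmult_lt_0_compat; lra).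
    replace ((f (t + h) - f t) / h * h) with (f (t + h) - f t) in H0 by (field; lra). lra.
  - assert (Hq := Hd h ltac:(lra) ltac:(rewrite Rabs_left; lra)). apply Rabs_def2 in Hq.
    assert (0 < (f (t + h) - f t) / h * (- h)) by (apply Rmult_lt_0_compat; lra).
    replace ((f (t + h) - f t) / h * (- h)) with (- (f (t + h) - f t)) in H0 by (field; lra). lra.
Qed.

Lemma dlim_pos_not_const f t l a b : a < b -> a <= t <= b ->
  (forall s, a <= s <= b -> f s = 0) -> derivable_pt_lim f t l -> ~ 0 < l.
Proof.
  intros Hab Ht Hz Hd Hl.
  destruct (dlim_pos_incr_near f t l Hd Hl) as [d [Hd0 [Hright Hleft]]].
  destruct (Rlt_le_dec t b).
  - set (h := Rmin (d / 2) ((b - t) / 2)).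
    assert (h <= d / 2) by apply Rmin_l. assert (h <= (b - t) / 2) by apply Rmin_r.
    assert (0 < h) by (apply Rmin_pos; lra).
    specialize (Hright h ltac:(lra)). rewrite !Hz in Hright by lra. lra.
  - set (h := Rmin (d / 2) ((t - a) / 2)).
    assert (h <= d / 2) by apply Rmin_l. assert (h <= (t - a) / 2) by apply Rmin_r.
    assert (0 < h) by (apply Rmin_pos; lra).
    specialize (Hleft (- h) ltac:(lra)). rewrite !Hz in Hleft by lra. lra.
Qed.

Lemma dlim_of_zero_on f t l a b : a < b -> a <= t <= b ->
  (forall s, a <= s <= b -> f s = 0) -> derivable_pt_lim f t l -> l = 0.
Proof.
  intros Hab Ht Hz Hd.
  destruct (Rtotal_order l 0) as [Hneg | [| Hpos]]; [exfalso | assumption | exfalso].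
  - apply (dlim_pos_not_const (fun s => - f s) t (- l) a b); try lra.
    + intros s Hs. rewrite Hz; [ring | exact Hs].
    + now apply dlim_opp.
  - exact (dlim_pos_not_const f t l a b Hab Ht Hz Hd Hpos).
Qed.

(* Leaving the axis upwards, [q2] must come back down at its first
   return, where the sign condition forces [q1 < 0]. *)
Lemma returns_on_negative_axis q1 q2 p2 tA tB : tA < tB ->
  (forall t, tA <= t <= tB -> derivable_pt_lim q2 t (p2 t)) ->
  (forall t, tA <= t <= tB -> q2 t = 0 -> 0 < q1 t * p2 t) ->
  q2 tA = 0 -> q2 tB = 0 -> 0 < p2 tA ->
  exists t1, tA <= t1 <= tB /\ q2 t1 = 0 /\ q1 t1 < 0.
Proof.
  intros Hab Hd Hsign HA HB Hp.
  destruct (dlim_pos_incr_near q2 tA (p2 tA) (Hd tA ltac:(lra)) Hp) as [d [Hd0 [Hright _]]].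
  set (h := Rmin (d / 2) ((tB - tA) / 2)).
  assert (h <= d / 2) by apply Rmin_l. assert (h <= (tB - tA) / 2) by apply Rmin_r.
  assert (0 < h) by (apply Rmin_pos; lra).
  assert (Hh : 0 < q2 (tA + h)) by (specialize (Hright h ltac:(lra)); lra).
  destruct (first_zero q2 (tA + h) tB) as [c [Hc [Hc0 Hbefore]]]; [lra | | exact Hh | lra |].
  { intros t Ht. exact (dlim_continuity_pt _ _ _ (Hd t ltac:(lra))). }
  exists c. split; [lra | split; [exact Hc0|]].
  specialize (Hsign c ltac:(lra) Hc0).
  destruct (Rle_lt_dec (p2 c) 0) as [Hp2 | Hp2]; [nra | exfalso].
  destruct (dlim_pos_incr_near q2 c (p2 c) (Hd c ltac:(lra)) Hp2) as [d' [Hd' [_ Hleft]]].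
  set (k := Rmin (d' / 2) ((c - (tA + h)) / 2)).
  assert (k <= d' / 2) by apply Rmin_l. assert (k <= (c - (tA + h)) / 2) by apply Rmin_r.
  assert (0 < k) by (apply Rmin_pos; lra).
  specialize (Hleft (- k) ltac:(lra)). specialize (Hbefore (c + - k) ltac:(lra)). lra.
Qed.

Lemma origin_in_hull_of_axis_points (S : R -> R -> Prop) a b :
  S a 0 -> S b 0 -> b < 0 < a -> in_conv_hull S 0 0.
Proof.
  intros Ha Hb Hab.
  exists 1%nat, (fun i => match i with O => a | _ => b end), (fun _ => 0),
    (fun i => match i with O => - b / (a - b) | _ => a / (a - b) end).
  split; [|split; [|split]]; [| simpl; field; lra | simpl; field; lra | simpl; ring].
  intros i Hi. destruct i as [|[|i]]; [| |lia]; (split; [assumption|]);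
    apply Rmult_le_pos; try lra; left; apply Rinv_0_lt_compat; lra.
Qed.

Lemma sum_f_R0_weighted_pos (w c : nat -> R) n :
  (forall i, (i <= n)%nat -> 0 <= w i /\ 0 < c i) ->
  0 <= sum_f_R0 (fun i => w i * c i) n /\
  (sum_f_R0 (fun i => w i * c i) n <= 0 -> sum_f_R0 w n = 0).
Proof.
  induction n as [|n IH]; intros H; simpl.
  - destruct (H 0%nat ltac:(lia)). split; intros; nra.
  - destruct (H (S n) ltac:(lia)) as [Hw Hc].
    destruct IH as [IH1 IH2]; [intros i Hi; apply H; lia|].
    assert (0 <= w (S n) * c (S n)) by nra.
    split; [lra|]. intros Hs. rewrite IH2 by lra.
    assert (w (S n) = 0) by nra. lra.
Qed.

Lemma origin_notin_hull_of_right_half (S : R -> R -> Prop) :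
  (forall z1 z2, S z1 z2 -> 0 < z1) -> ~ in_conv_hull S 0 0.
Proof.
  intros HS [n [c1 [c2 [w [Hi [Hw [Hs1 _]]]]]]].
  destruct (sum_f_R0_weighted_pos w c1 n) as [_ H].
  - intros i Hle. destruct (Hi i Hle) as [Hc Hwi]. split; [exact Hwi|]. exact (HS _ _ Hc).
  - rewrite H in Hw by lra. lra.
Qed.

Lemma norm2_0_0 : norm2 0 0 = 0.
Proof. unfold norm2. replace (0 ^ 2 + 0 ^ 2) with 0 by ring. apply sqrt_0. Qed.

Lemma norm2_pos_0 a : 0 < a -> norm2 a 0 = a.
Proof.
  intro. unfold norm2. replace (a ^ 2 + 0 ^ 2) with (a * a) by ring. apply sqrt_square; lra.
Qed.

Lemma kepler_angular_momentum q1 q2 p1 p2 a b : kepler_sol q1 q2 p1 p2 a b ->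
  forall t, a <= t <= b -> q1 t * p2 t - q2 t * p1 t = q1 a * p2 a - q2 a * p1 a.
Proof.
  intros [_ Hk] t Ht.
  apply (const_of_dlim_0 (fun t => q1 t * p2 t - q2 t * p1 t) a t); [lra|].
  intros s Hs. destruct (Hk s ltac:(lra)) as [_ [Hd1 [Hd2 [Hd3 Hd4]]]].
  eapply dlim_eq.
  - apply (dlim_minus (fun t => q1 t * p2 t) (fun t => q2 t * p1 t)); apply dlim_mult; eauto.
  - unfold Rdiv. ring.
Qed.

Section DirectArc.
Variables (q1 q2 p1 p2 : R -> R) (tA tB xA xB : R).
Hypotheses (HB : 0 < xB) (HBA : xB < xA)
  (Hd : direct_arc q1 q2 p1 p2 tA tB xA 0 xB 0).

Lemma direct_arc_time_pos : tA < tB.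
Proof.
  destruct Hd as [[Hab _] [_ [_ [H1B [_ _]]]]].
  destruct (Rle_lt_or_eq_dec _ _ Hab) as [| <-]; [assumption|].
  destruct Hd as [_ [H1A _]]. lra.
Qed.

Lemma direct_arc_momentum t : tA <= t <= tB -> q1 t * p2 t - q2 t * p1 t = xA * p2 tA.
Proof.
  intro Ht. destruct Hd as [Hk [H1A [H2A _]]].
  rewrite (kepler_angular_momentum q1 q2 p1 p2 tA tB Hk t Ht), H1A, H2A. ring.
Qed.

(* Otherwise the arc leaves the axis and, with constant nonzero angular
   momentum, comes back to it on the far side of O. *)
Lemma direct_arc_start_radial : p2 tA = 0.
Proof.
  destruct (Req_dec (p2 tA) 0) as [|Hne]; [assumption|exfalso].
  pose proof direct_arc_time_pos as Hlt.
  destruct Hd as [[_ Hk] [H1A [H2A [H1B [H2B Hhull]]]]].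
  set (c := p2 tA). assert (Hc : 0 < c * c) by (apply Rsqr_pos_lt; exact Hne).
  destruct (returns_on_negative_axis q1 (fun t => c * q2 t) (fun t => c * p2 t) tA tB Hlt)
    as [t1 [Ht1 [Hz Hq]]].
  - intros t Ht. apply dlim_scal, (Hk t Ht).
  - intros t Ht Hz. pose proof (direct_arc_momentum t Ht) as HL.
    assert (Hq2 : q2 t = 0) by (destruct (Rmult_integral _ _ Hz); [contradiction | assumption]).
    rewrite Hq2 in HL. replace (q1 t * (c * p2 t)) with (c * (q1 t * p2 t - 0 * p1 t)) by ring.
    rewrite HL. fold c. nra.
  - rewrite H2A; ring.
  - rewrite H2B; ring.
  - exact Hc.
  - apply Hhull, (origin_in_hull_of_axis_points _ xA (q1 t1)); [| |lra].
    + exists tA. split; [lra | split; assumption].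
    + exists t1. split; [exact Ht1 | split; [reflexivity|]].
      destruct (Rmult_integral _ _ Hz); [contradiction | assumption].
Qed.

(* With zero angular momentum [q2 / q1] is constant as long as [q1 > 0],
   and [q1] cannot vanish first without a collision. *)
Lemma direct_arc_on_axis t : tA <= t <= tB -> q2 t = 0 /\ 0 < q1 t.
Proof.
  destruct Hd as [[_ Hk] [H1A [H2A _]]].
  assert (HL : forall t, tA <= t <= tB -> q1 t * p2 t - q2 t * p1 t = 0)
    by (intros s Hs; rewrite direct_arc_momentum, direct_arc_start_radial by exact Hs; ring).
  assert (Hratio : forall t, tA <= t <= tB -> (forall s, tA <= s <= t -> 0 < q1 s) -> q2 t = 0).
  { intros s Hs Hpos.
    assert (Hr : q2 s * / q1 s = q2 tA * / q1 tA).
    { apply (const_of_dlim_0 (fun t => q2 t * / q1 t) tA s); [lra|].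
      intros r Hr. destruct (Hk r ltac:(lra)) as [_ [Hd1 [Hd2 _]]].
      specialize (Hpos r Hr). specialize (HL r ltac:(lra)).
      eapply dlim_eq;
        [apply (dlim_mult q2 (fun t => / q1 t)); [eauto | apply dlim_inv; eauto; lra]|].
      field_simplify_eq; lra. }
    rewrite H2A, Rmult_0_l in Hr. specialize (Hpos s ltac:(lra)).
    apply Rmult_integral in Hr as [| Hinv]; [assumption|].
    pose proof (Rinv_neq_0_compat (q1 s) ltac:(lra)). contradiction. }
  assert (Hq1 : forall t, tA <= t <= tB -> 0 < q1 t).
  { intros s Hs. destruct (Rlt_le_dec 0 (q1 s)) as [|Hle]; [assumption | exfalso].
    assert (Hts : tA < s) by (destruct (Rle_lt_or_eq_dec _ _ (proj1 Hs)) as [| <-]; lra).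
    destruct (first_zero q1 tA s Hts) as [c [Hc [Hc0 Hbefore]]]; [| lra | exact Hle |].
    { intros r Hr. exact (dlim_continuity_pt _ _ _ (proj1 (proj2 (Hk r ltac:(lra))))). }
    assert (Hq2c : q2 c = 0).
    { apply (continuity_pt_zero_of_left q2 tA c); [lra | |].
      - exact (dlim_continuity_pt _ _ _ (proj1 (proj2 (proj2 (Hk c ltac:(lra)))))).
      - intros r Hr. apply Hratio; [lra|]. intros r' Hr'. apply Hbefore. lra. }
    destruct (Hk c ltac:(lra)) as [Hn _]. rewrite Hc0, Hq2c, norm2_0_0 in Hn. now apply Hn. }
  intro Ht. split; [apply Hratio; [exact Ht|] | apply Hq1, Ht].
  intros s Hs. apply Hq1. lra.
Qed.

Lemma direct_arc_rectilinear t : tA <= t <= tB -> q2 t = 0 /\ p2 t = 0 /\ 0 < q1 t.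
Proof.
  intro Ht. destruct (direct_arc_on_axis t Ht) as [Hq2 Hq1].
  split; [exact Hq2 | split; [|exact Hq1]].
  destruct Hd as [[_ Hk] _].
  apply (dlim_of_zero_on q2 t (p2 t) tA tB direct_arc_time_pos Ht);
    [intros s Hs; apply (direct_arc_on_axis s Hs) | apply (Hk t Ht)].
Qed.

End DirectArc.

Definition transfer_time (xA xB u : R) :=
  if Rlt_dec u 0 then infall_time xA xB u else ellipse_time xA xB u.

Lemma radial_arc_direct x v tA tB a b : radial_solution x v tA tB -> tA <= tB ->
  x tA = a -> x tB = b -> direct_arc x (fun _ => 0) v (fun _ => 0) tA tB a 0 b 0.
Proof.
  intros Hs Hab Ha Hb. split; [split; [exact Hab|] | repeat split; auto].
  - intros t Ht. destruct (Hs t Ht) as [Hx [Hdx Hdv]].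
    rewrite norm2_pos_0 by exact Hx. repeat split; [lra | exact Hdx | apply dlim_const | | ].
    + eapply dlim_eq; [exact Hdv|]. field. lra.
    + eapply dlim_eq; [apply dlim_const|]. unfold Rdiv. ring.
  - apply origin_notin_hull_of_right_half. intros z1 z2 [t [Ht [<- _]]]. apply (Hs t Ht).
Qed.

Section Transfer.
Variables xA xB : R.
Hypotheses (HB : 0 < xB) (HBA : xB < xA).

Lemma transfer_time_formula x v tA tB : radial_solution x v tA tB -> tA <= tB ->
  x tA = xA -> x tB = xB -> tB - tA = transfer_time xA xB (v tA).
Proof.
  intros Hs Hab HxA HxB. unfold transfer_time. destruct (Rlt_dec (v tA) 0) as [Hv | Hv].
  - now apply (infall_time_formula x v).
  - apply (ellipse_time_formula x v); auto. apply lt_vE_sq; [lra|].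
    pose proof (radial_arc_below_escape x v tA tB xA xB HB HBA Hs Hab HxA HxB). lra.
Qed.

Lemma transfer_arc_exists tA u : u < vE xA ->
  exists x v, 0 < transfer_time xA xB u /\
    radial_solution x v tA (tA + transfer_time xA xB u) /\
    x tA = xA /\ v tA = u /\ x (tA + transfer_time xA xB u) = xB.
Proof.
  intro Hu.
  assert (Hex : exists x v T, 0 < T /\ radial_solution x v tA (tA + T) /\
                  x tA = xA /\ v tA = u /\ x (tA + T) = xB).
  { destruct (Rlt_le_dec u 0).
    - now apply infall_exists.
    - apply ellipse_exists; auto. apply lt_vE_sq; [lra|]. pose proof (vE_pos xA); lra. }
  destruct Hex as [x [v [T [HT [Hs [H1 [H2 H3]]]]]]].
  pose proof (transfer_time_formula x v tA (tA + T) Hs ltac:(lra) H1 H3) as Ht.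
  rewrite H2 in Ht. replace (tA + T - tA) with T in Ht by ring. subst T.
  now exists x, v.
Qed.

(* Both time formulas apply to an infall slower than escape. *)
Lemma infall_time_eq_ellipse_time u : - vE xA < u < 0 ->
  infall_time xA xB u = ellipse_time xA xB u.
Proof.
  intro Hu.
  destruct (infall_exists 0 xA xB u HB HBA ltac:(lra)) as [x [v [T [HT [Hs [H1 [H2 H3]]]]]]].
  pose proof (infall_time_formula x v 0 (0 + T) xA xB HB HBA Hs ltac:(lra) H1 H3) as E1.
  pose proof (ellipse_time_formula x v 0 (0 + T) xA xB HB HBA Hs ltac:(lra) H1 H3) as E2.
  rewrite H2 in E1, E2. specialize (E2 (lt_vE_sq xA u ltac:(lra) ltac:(lra))). lra.
Qed.

Lemma transfer_time_dlim u : u < vE xA ->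
  exists d, derivable_pt_lim (transfer_time xA xB) u d /\ 0 < d.
Proof.
  intro Hu. pose proof (vE_pos xA ltac:(lra)) as Hve.
  destruct (Rlt_le_dec u 0) as [Hn | Hp].
  - destruct (infall_time_dlim xA xB u HB HBA Hn) as [d [Hd Hd0]].
    exists d. split; [|exact Hd0].
    apply (dlim_locally_ext (infall_time xA xB) _ _ _ (- u)); [lra | |exact Hd].
    intros y Hy. apply Rabs_def2 in Hy. unfold transfer_time.
    destruct (Rlt_dec y 0); [reflexivity | lra].
  - assert (Huu : u * u < 2 / xA) by (apply lt_vE_sq; lra).
    exists (ellipse_time_deriv xA xB u).
    split; [|now apply ellipse_time_deriv_pos].
    set (r := Rmin (u + vE xA) (vE xA - u)).
    assert (r <= u + vE xA) by apply Rmin_l. assert (r <= vE xA - u) by apply Rmin_r.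
    apply (dlim_locally_ext (ellipse_time xA xB) _ _ _ r);
      [apply Rmin_pos; lra | | now apply ellipse_time_dlim].
    intros y Hy. apply Rabs_def2 in Hy. unfold transfer_time.
    destruct (Rlt_dec y 0); [|reflexivity].
    symmetry. apply infall_time_eq_ellipse_time. lra.
Qed.

Lemma transfer_time_incr u w : u < w -> w < vE xA ->
  transfer_time xA xB u < transfer_time xA xB w.
Proof.
  intros Huw Hw. apply (incr_of_dlim_pos _ u w); try lra.
  intros t Ht. apply transfer_time_dlim. lra.
Qed.

Lemma transfer_time_small eps : 0 < eps ->
  exists N, forall u, u < N -> transfer_time xA xB u < eps.
Proof.
  intro Heps. exists (Rmin (-1) (- ((xA - xB) / eps))). intros u Hu.
  assert (Hu1 : u < -1) by (eapply Rlt_le_trans; [exact Hu | apply Rmin_l]).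
  assert (Hu2 : u < - ((xA - xB) / eps)) by (eapply Rlt_le_trans; [exact Hu | apply Rmin_r]).
  unfold transfer_time. destruct (Rlt_dec u 0) as [Hn | Hn]; [|lra].
  eapply Rle_lt_trans; [exact (infall_time_le xA xB u HB HBA Hn)|].
  apply (Rmult_lt_reg_r (- u)); [lra|].
  replace ((xA - xB) / - u * - u) with (xA - xB) by (field; lra).
  apply (Rmult_lt_compat_r eps) in Hu2; [|lra].
  replace (- ((xA - xB) / eps) * eps) with (- (xA - xB)) in Hu2 by (field; lra). nra.
Qed.

Lemma transfer_time_ge_near_vE u : vE xA / 2 < u < vE xA ->
  xA / (4 * (vE xA - u)) < transfer_time xA xB u.
Proof.
  intro Hu. pose proof (vE_pos xA ltac:(lra)) as Hve.
  assert (Huu : u * u < 2 / xA) by (apply lt_vE_sq; lra).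
  unfold transfer_time. destruct (Rlt_dec u 0) as [|_]; [lra|].
  eapply Rlt_le_trans; [|apply (ellipse_time_ge xA xB HB HBA u); lra].
  unfold semi_major. rewrite <- vE_sq by lra.
  replace (vE xA * vE xA - u * u) with ((vE xA - u) * (vE xA + u)) by ring.
  assert (0 < (vE xA - u) * (vE xA + u)) by (apply Rmult_lt_0_compat; lra).
  apply (Rmult_lt_reg_r (4 * (vE xA - u) * (vE xA + u))); [nra|].
  replace (xA / (4 * (vE xA - u)) * (4 * (vE xA - u) * (vE xA + u))) with (xA * (vE xA + u))
    by (field; lra).
  replace (/ ((vE xA - u) * (vE xA + u)) * xA * u * (4 * (vE xA - u) * (vE xA + u)))
    with (4 * xA * u) by (field; lra).
  nra.
Qed.

Lemma transfer_time_large M : exists delta, 0 < delta /\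
  forall u, vE xA - delta < u < vE xA -> M < transfer_time xA xB u.
Proof.
  pose proof (vE_pos xA ltac:(lra)) as Hve.
  set (K := Rabs M + 1).
  assert (HK : M < K /\ 0 < K) by (pose proof (Rle_abs M); pose proof (Rabs_pos M); unfold K; lra).
  exists (Rmin (vE xA / 2) (xA / (4 * K))). split.
  { apply Rmin_pos; [lra|]. apply Rdiv_lt_0_compat; lra. }
  intros u Hu.
  assert (Rmin (vE xA / 2) (xA / (4 * K)) <= vE xA / 2) by apply Rmin_l.
  assert (Hd : Rmin (vE xA / 2) (xA / (4 * K)) <= xA / (4 * K)) by apply Rmin_r.
  eapply Rlt_trans; [|apply transfer_time_ge_near_vE; lra].
  apply Rlt_trans with K; [lra|].
  apply (Rmult_lt_reg_r (4 * (vE xA - u))); [lra|].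
  replace (xA / (4 * (vE xA - u)) * (4 * (vE xA - u))) with xA by (field; lra).
  assert (Hu' : vE xA - u < xA / (4 * K)) by lra.
  apply (Rmult_lt_compat_l (4 * K)) in Hu'; [|lra].
  replace (4 * K * (xA / (4 * K))) with xA in Hu' by (field; lra). nra.
Qed.

Lemma transfer_first_arrival x v tA : radial_solution x v tA (tA + transfer_time xA xB (v tA)) ->
  x tA = xA -> forall t, tA <= t < tA + transfer_time xA xB (v tA) -> x t <> xB.
Proof.
  intros Hs HxA t Ht Hxt.
  pose proof (radial_solution_sub x v _ _ tA t Hs ltac:(lra) ltac:(lra)) as Hst.
  pose proof (transfer_time_formula x v tA t Hst ltac:(lra) HxA Hxt). lra.
Qed.

Lemma direct_arc_radial q1 q2 p1 p2 tA tB : direct_arc q1 q2 p1 p2 tA tB xA 0 xB 0 ->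
  radial_solution q1 p1 tA tB.
Proof.
  intros Hd t Ht.
  destruct (direct_arc_rectilinear q1 q2 p1 p2 tA tB xA xB HB HBA Hd t Ht) as [Hq2 [_ Hq1]].
  destruct Hd as [[_ Hk] _]. destruct (Hk t Ht) as [_ [Hd1 [_ [Hd3 _]]]].
  rewrite Hq2, norm2_pos_0 in Hd3 by exact Hq1.
  split; [exact Hq1 | split; [exact Hd1|]]. eapply dlim_eq; [exact Hd3|]. field. lra.
Qed.

Lemma transfer_arc tA u : u < vE xA ->
  0 < transfer_time xA xB u /\
  exists x v : R -> R,
    direct_arc x (fun _ => 0) v (fun _ => 0) tA (tA + transfer_time xA xB u) xA 0 xB 0 /\
    v tA = u /\
    (forall t, tA <= t < tA + transfer_time xA xB u -> x t <> xB) /\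
    (0 <= u -> exists tc, tA <= tc <= tA + transfer_time xA xB u /\ v tc = 0).
Proof.
  intro Hu.
  destruct (transfer_arc_exists tA u Hu) as [x [v [HT [Hs [H1 [<- H3]]]]]].
  split; [exact HT|]. exists x, v.
  split; [apply radial_arc_direct; auto; lra | split; [reflexivity|]].
  split; [now apply transfer_first_arrival|].
  apply (radial_arc_culminates x v tA (tA + transfer_time xA xB (v tA)) xA xB); auto; lra.
Qed.

Lemma direct_arc_is_transfer q1 q2 p1 p2 tA tB :
  direct_arc q1 q2 p1 p2 tA tB xA 0 xB 0 ->
  (forall t, tA <= t <= tB -> q2 t = 0 /\ p2 t = 0) /\
  p1 tA < vE xA /\ tB - tA = transfer_time xA xB (p1 tA).
Proof.
  intro Hd. pose proof (direct_arc_radial q1 q2 p1 p2 tA tB Hd) as Hs.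
  split; [intros t Ht; now destruct (direct_arc_rectilinear q1 q2 p1 p2 tA tB xA xB HB HBA Hd t Ht)
                          as [? [? _]]|].
  destruct Hd as [[Hab _] [H1A [_ [H1B _]]]].
  split; [exact (radial_arc_below_escape q1 p1 tA tB xA xB HB HBA Hs Hab H1A H1B)|].
  exact (transfer_time_formula q1 p1 tA tB Hs Hab H1A H1B).
Qed.

End Transfer.

Theorem proposition2 (xA xB : R) (HB : 0 < xB) (HBA : xB < xA) :
  exists T : R -> R,
    (forall tA vA, vA < vE xA ->
       0 < T vA /\
       exists x v : R -> R,
         direct_arc x (fun _ => 0) v (fun _ => 0)
                    tA (tA + T vA) xA 0 xB 0 /\
         v tA = vA /\
         (forall t, tA <= t < tA + T vA -> x t <> xB) /\
         (0 <= vA -> exists tc, tA <= tc <= tA + T vA /\ v tc = 0)) /\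
    (forall (q1 q2 p1 p2 : R -> R) (tA tB : R),
       direct_arc q1 q2 p1 p2 tA tB xA 0 xB 0 ->
       (forall t, tA <= t <= tB -> q2 t = 0 /\ p2 t = 0) /\
       p1 tA < vE xA /\
       tB - tA = T (p1 tA)) /\
    (forall u w, u < w -> w < vE xA -> T u < T w) /\
    (forall vA, vA < vE xA ->
       exists d, derivable_pt_lim T vA d /\ 0 < d) /\
    (forall eps, 0 < eps -> exists N, forall vA, vA < N -> T vA < eps) /\
    (forall M, exists delta, 0 < delta /\
       forall vA, vE xA - delta < vA < vE xA -> M < T vA).
Proof.
  exists (transfer_time xA xB).
  split; [|split; [|split; [|split; [|split]]]].
  - now apply transfer_arc.
  - now apply direct_arc_is_transfer.
  - now apply transfer_time_incr.
  - now apply transfer_time_dlim.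
  - now apply transfer_time_small.
  - now apply transfer_time_large.
Qed.
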